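(* Let $\lambda>0$, $\gamma>0$, and let $\beta_1=\beta_1(\gamma)$ be the unique positive solution of $\frac{\sqrt\pi}{2}\gamma x(1+x)^{1/2}(3+x)=1$. For $b\in[0,\beta_1)$ let $\varphi_b$ denote the unique solution, within the set $K$ of bounded analytic functions $h:[0,\lambda]\to\mathbb{R}$ with $0\le h\le 1$, of \begin{align*} &[(1+b\, y(\eta))y'(\eta)]'+2\eta y'(\eta)=0, \quad 0<\eta<\lambda,\\ &y'(0)+b\, y(0)y'(0)-\gamma y(0)=0,\\ &y(\lambda)=1. \end{align*} Let $0<b<\beta_1$. Then there exists $L>0$ such that for all $b_1,b_2\in[0,b]$, $$\|\varphi_{b_1}-\varphi_{b_2}\|_\infty\le L|b_1-b_2|,$$ where $\|\cdot\|_\infty$ is the supremum norm on $[0,\lambda]$.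
   Context: Existence and uniqueness of $\varphi_b$ in $K$ for every $b\in[0,\beta_1)$ is known (it is the unique fixed point of a contraction on $K$). *)

From Stdlib Require Import Reals Lra.
From Coquelicot Require Import Coquelicot.
Open Scope R_scope.

Definition analytic_on_0l (lam : R) (h : R -> R) : Prop :=
  forall x, 0 <= x <= lam ->
    exists r : R, 0 < r /\ exists a : nat -> R,
      forall y, 0 <= y <= lam -> Rabs (y - x) < r ->
        is_series (fun n => a n * (y - x) ^ n) (h y).

Definition inK (lam : R) (h : R -> R) : Prop :=
  analytic_on_0l lam h /\
  (exists M, forall x, 0 <= x <= lam -> Rabs (h x) <= M) /\
  (forall x, 0 <= x <= lam -> 0 <= h x <= 1).

Definition right_deriv_at (y : R -> R) (x d : R) : Prop :=
  filterlim (fun t => (y t - y x) / (t - x)) (at_right x) (locally d).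

Definition solves_bvp (lam gamma b : R) (y : R -> R) : Prop :=
  (exists dy : R -> R,
     (forall eta, 0 < eta < lam -> is_derive y eta (dy eta)) /\
     (forall eta, 0 < eta < lam ->
        ex_derive (fun t => (1 + b * y t) * dy t) eta /\
        Derive (fun t => (1 + b * y t) * dy t) eta + 2 * eta * dy eta = 0)) /\
  (exists d0, right_deriv_at y 0 d0 /\ d0 + b * y 0 * d0 - gamma * y 0 = 0) /\
  y lam = 1.

(* With the flux u = (1 + b y) y', the problem becomes the first-order system
   y' = u / (1 + b y), u' = - 2 x u / (1 + b y), u(0) = gamma y(0), along which u stays
   positive and bounded by gamma.  For b1 < b2 the solutions satisfy b1 phi_b1 <= b2 phi_b2
   (a comparison principle applied to (b1 / b2) phi_b1), so the flux ratio u2 / u1 is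
   nondecreasing, while the difference of the Kirchhoff transforms y + b y^2 / 2 has
   derivative u2 - u1 and end value (b2 - b1) / 2.  Integrating these differential
   inequalities, with a Gronwall bound on u2 / u1 when phi_b2(0) < phi_b1(0), bounds the
   Kirchhoff difference, hence phi_b1 - phi_b2, by a constant times b2 - b1. *)

From Stdlib Require Import Reals Lra Classical.
From Coquelicot Require Import Coquelicot.
Open Scope R_scope.

Notation Icc p q := (fun t : R => p <= t <= q).

Section ContinuousOn.

Variable D : R -> Prop.

Lemma continuous_on_plus (f g : R -> R) :
  continuous_on D f -> continuous_on D g -> continuous_on D (fun t => f t + g t).
Proof.
  intros Hf Hg x Dx.
  eapply filterlim_comp_2; [apply Hf, Dx | apply Hg, Dx | apply (filterlim_plus (f x) (g x))].
Qed.

Lemma continuous_on_mult (f g : R -> R) :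
  continuous_on D f -> continuous_on D g -> continuous_on D (fun t => f t * g t).
Proof.
  intros Hf Hg x Dx.
  eapply filterlim_comp_2; [apply Hf, Dx | apply Hg, Dx | apply (filterlim_mult (f x) (g x))].
Qed.

Lemma continuous_on_comp (f g : R -> R) :
  continuous_on D f -> (forall x, D x -> continuous g (f x)) ->
  continuous_on D (fun t => g (f t)).
Proof. intros Hf Hg x Dx. eapply filterlim_comp; [apply Hf, Dx | apply Hg, Dx]. Qed.

Lemma continuous_on_const (c : R) : continuous_on D (fun _ => c).
Proof. apply continuous_on_forall. intros x _. apply continuous_const. Qed.

Lemma continuous_on_id : continuous_on D (fun t => t).
Proof. apply continuous_on_forall. intros x _. apply continuous_id. Qed.

Lemma continuous_on_opp (f : R -> R) :
  continuous_on D f -> continuous_on D (fun t => - f t).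
Proof. intros Hf x Dx. eapply filterlim_comp; [apply Hf, Dx | apply (filterlim_opp (f x))]. Qed.

Lemma continuous_on_minus (f g : R -> R) :
  continuous_on D f -> continuous_on D g -> continuous_on D (fun t => f t - g t).
Proof. intros Hf Hg. apply (continuous_on_plus f (fun t => - g t) Hf), continuous_on_opp, Hg. Qed.

Lemma continuous_on_inv (f : R -> R) :
  continuous_on D f -> (forall x, D x -> f x <> 0) -> continuous_on D (fun t => / f t).
Proof.
  intros Hf Hnz. apply (continuous_on_comp f Rinv Hf). intros x Dx. apply continuous_Rinv, Hnz, Dx.
Qed.

Lemma continuous_on_exp (f : R -> R) :
  continuous_on D f -> continuous_on D (fun t => exp (f t)).
Proof. intros Hf. apply (continuous_on_comp f exp Hf). intros x _. apply continuous_exp. Qed.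

Lemma continuous_on_of_locally_eq (f : R -> R) :
  (forall x, D x -> exists g : R -> R, continuous g x /\ locally x (fun t => D t -> f t = g t)) ->
  continuous_on D f.
Proof.
  intros H x Dx. destruct (H x Dx) as [g [Hg Heq]].
  assert (Efx : f x = g x) by exact (locally_singleton _ _ Heq Dx).
  rewrite Efx. apply (filterlim_ext_loc g).
  - unfold within. eapply filter_imp; [|exact Heq]. intros t Ht Dt. symmetry. exact (Ht Dt).
  - exact (filterlim_filter_le_1 _ (filter_le_within D) Hg).
Qed.

Lemma continuous_on_ball (f : R -> R) x : continuous_on D f -> D x ->
  forall eps, 0 < eps ->
  exists d, 0 < d /\ forall t, D t -> Rabs (t - x) < d -> Rabs (f t - f x) < eps.
Proof.
  intros Hf Dx eps Heps.
  destruct (proj1 (filterlim_locally f (f x)) (Hf x Dx) (mkposreal eps Heps)) as [d Hd].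
  exists d. split; [apply cond_pos|]. intros t Dt Ht. exact (Hd t Ht Dt).
Qed.

End ContinuousOn.

Lemma is_derive_eq (f : R -> R) (x l l' : R) : is_derive f x l -> l = l' -> is_derive f x l'.
Proof. now intros H <-. Qed.

Lemma is_derive_Ropp (f : R -> R) (x df : R) : is_derive f x df ->
  is_derive (fun t => - f t) x (- df).
Proof. apply (is_derive_opp f x df). Qed.

Lemma is_derive_Rplus (f g : R -> R) (x df dg : R) : is_derive f x df -> is_derive g x dg ->
  is_derive (fun t => f t + g t) x (df + dg).
Proof. apply (is_derive_plus f g x df dg). Qed.

Lemma is_derive_Rminus (f g : R -> R) (x df dg : R) : is_derive f x df -> is_derive g x dg ->
  is_derive (fun t => f t - g t) x (df - dg).
Proof. apply (is_derive_minus f g x df dg). Qed.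

Lemma is_derive_Rmult (f g : R -> R) (x df dg : R) : is_derive f x df -> is_derive g x dg ->
  is_derive (fun t => f t * g t) x (df * g x + f x * dg).
Proof. intros Hf Hg. apply (is_derive_mult f g x df dg Hf Hg), Rmult_comm. Qed.

Lemma is_derive_linear (k x : R) : is_derive (fun t => k * t) x k.
Proof.
  eapply is_derive_eq; [apply (is_derive_scal (fun t => t) x k 1)|apply Rmult_1_r].
  apply is_derive_Reals, derivable_pt_lim_id.
Qed.

Lemma is_derive_exp_linear (k x : R) : is_derive (fun t => exp (k * t)) x (k * exp (k * x)).
Proof. apply (is_derive_comp exp (fun t => k * t)); [apply is_derive_exp|apply is_derive_linear]. Qed.

Lemma exp_monotone x y : x <= y -> exp x <= exp y.
Proof. intros [H|<-]; [left; apply exp_increasing, H|right; reflexivity]. Qed.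

Lemma exp_sub1_le x : 0 <= x -> exp x - 1 <= x * exp x.
Proof.
  intros Hx. pose proof (exp_ineq1_le (- x)) as H. rewrite exp_Ropp in H.
  pose proof (exp_pos x). apply (Rmult_le_compat_r (exp x)) in H; [|lra].
  rewrite Rinv_l in H by lra. nra.
Qed.

Lemma exp_sub1_le_lin A d b : 0 <= A -> 0 <= d <= b -> exp (A * d) - 1 <= A * exp (A * b) * d.
Proof.
  intros HA Hd. pose proof (exp_sub1_le (A * d) ltac:(nra)).
  assert (exp (A * d) <= exp (A * b)) by (apply exp_monotone; nra).
  assert (0 <= A * d) by nra. nra.
Qed.

(* MVT_gen needs two-sided continuity, so a function continuous on [p, q]
   is first extended by constants through [clamp p q]. *)
Definition clamp (p q x : R) := Rmax p (Rmin q x).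

Lemma clamp_id p q x : p <= x <= q -> clamp p q x = x.
Proof. intros Hx. unfold clamp. rewrite Rmin_right, Rmax_right; lra. Qed.

Lemma clamp_Icc p q x : p <= q -> p <= clamp p q x <= q.
Proof. intros H. unfold clamp, Rmax, Rmin. repeat destruct Rle_dec; lra. Qed.

Lemma clamp_lipschitz p q x y : Rabs (clamp p q x - clamp p q y) <= Rabs (x - y).
Proof.
  unfold clamp, Rmax, Rmin. repeat destruct Rle_dec; unfold Rabs; repeat destruct Rcase_abs; lra.
Qed.

Lemma continuous_clamp p q (f : R -> R) x : p <= q -> continuous_on (Icc p q) f ->
  p <= x <= q -> continuous (fun t => f (clamp p q t)) x.
Proof.
  intros Hpq Hf Hx. unfold continuous. rewrite (clamp_id p q x Hx).
  eapply filterlim_comp; [|exact (Hf x Hx)].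
  intros P [e He]. exists e. intros t Ht.
  apply He; [|apply clamp_Icc, Hpq].
  change (Rabs (clamp p q t - x) < e). rewrite <- (clamp_id p q x Hx) at 1.
  eapply Rle_lt_trans; [apply clamp_lipschitz|exact Ht].
Qed.

Lemma le_of_derive_nonneg p q (f df : R -> R) : p <= q -> continuous_on (Icc p q) f ->
  (forall x, p < x < q -> is_derive f x (df x)) ->
  (forall x, p < x < q -> 0 <= df x) -> f p <= f q.
Proof.
  intros Hpq Hf Hd Hpos. destruct (Req_dec p q) as [<-|Hne]; [lra|].
  set (dg x := if Rlt_dec p x then if Rlt_dec x q then df x else 0 else 0).
  destruct (MVT_gen (fun t => f (clamp p q t)) p q dg) as [c [Hc Hmvt]];
    rewrite ?Rmin_left, ?Rmax_right in * by lra.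
  - intros x Hx. unfold dg. do 2 (destruct Rlt_dec; [|lra]).
    apply (is_derive_ext_loc f); [|apply Hd; lra].
    assert (He : 0 < Rmin (x - p) (q - x)) by (apply Rmin_pos; lra).
    exists (mkposreal _ He). intros t Ht. change (Rabs (t - x) < Rmin (x - p) (q - x)) in Ht.
    pose proof (Rmin_l (x - p) (q - x)). pose proof (Rmin_r (x - p) (q - x)).
    apply Rabs_def2 in Ht. rewrite clamp_id; lra.
  - intros x Hx. apply continuity_pt_filterlim, continuous_clamp; auto.
  - rewrite !clamp_id in Hmvt by lra.
    assert (0 <= dg c) by (unfold dg; do 2 (destruct Rlt_dec; [|lra]); apply Hpos; lra).
    nra.
Qed.

Lemma ge_of_derive_nonpos p q (f df : R -> R) : p <= q -> continuous_on (Icc p q) f ->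
  (forall x, p < x < q -> is_derive f x (df x)) ->
  (forall x, p < x < q -> df x <= 0) -> f q <= f p.
Proof.
  intros Hpq Hf Hd Hneg.
  enough (- f p <= - f q) by lra.
  apply (le_of_derive_nonneg p q (fun t => - f t) (fun t => - df t) Hpq).
  - apply continuous_on_opp, Hf.
  - intros x Hx. apply is_derive_Ropp, Hd, Hx.
  - intros x Hx. specialize (Hneg x Hx). lra.
Qed.

Lemma gronwall_le p q (f df : R -> R) K : p <= q -> continuous_on (Icc p q) f ->
  (forall x, p < x < q -> is_derive f x (df x)) ->
  (forall x, p < x < q -> df x <= K * f x) -> f q <= f p * exp (K * (q - p)).
Proof.
  intros Hpq Hf Hd Hle.
  assert (Hdecr : f q * exp (- K * q) <= f p * exp (- K * p)).
  { apply (ge_of_derive_nonpos p q (fun t => f t * exp (- K * t))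
      (fun x => (df x - K * f x) * exp (- K * x)) Hpq).
    - apply continuous_on_mult; [exact Hf|].
      apply continuous_on_exp, continuous_on_mult; [apply continuous_on_const|apply continuous_on_id].
    - intros x Hx. eapply is_derive_eq;
        [apply is_derive_Rmult; [apply Hd, Hx|apply is_derive_exp_linear]|cbv beta; ring].
    - intros x Hx. pose proof (Hle x Hx). pose proof (exp_pos (- K * x)). nra. }
  apply (Rmult_le_compat_r (exp (K * q))) in Hdecr; [|left; apply exp_pos].
  rewrite Rmult_assoc, <- exp_plus, Rmult_assoc, <- exp_plus in Hdecr.
  replace (- K * q + K * q) with 0 in Hdecr by ring. rewrite exp_0, Rmult_1_r in Hdecr.
  now replace (- K * p + K * q) with (K * (q - p)) in Hdecr by ring.
Qed.

Lemma first_zero_after p q (g : R -> R) : p <= q -> continuous_on (Icc p q) g ->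
  g p < 0 -> 0 <= g q ->
  exists x0, p < x0 <= q /\ g x0 = 0 /\ forall x, p <= x <= x0 -> g x <= 0.
Proof.
  intros Hpq Hg Hp Hq.
  set (E x := p <= x <= q /\ forall s, p <= s <= x -> g s < 0).
  assert (Ep : E p) by (split; [lra|]; intros s Hs; replace s with p by lra; exact Hp).
  destruct (completeness E) as [m [Hub Hlub]]; [exists q; intros x [Hx _]; lra|now exists p|].
  assert (Hpm : p <= m) by exact (Hub p Ep).
  assert (Hmq : m <= q) by (apply Hlub; intros x [Hx _]; lra).
  assert (Hbelow : forall s, p <= s < m -> g s < 0).
  { intros s Hs. destruct (classic (is_upper_bound E s)) as [Hs'|Hs'].
    - specialize (Hlub s Hs'). lra.
    - apply not_all_ex_not in Hs'. destruct Hs' as [x Hx].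
      apply imply_to_and in Hx. destruct Hx as [[_ Hx] Hsx]. apply Hx. lra. }
  assert (Hgm_le : g m <= 0).
  { destruct (Rle_lt_dec (g m) 0) as [|Hpos]; [assumption|exfalso].
    assert (Hmp : p < m) by (destruct (Req_dec m p); [subst; lra|lra]).
    destruct (continuous_on_ball _ g m Hg (conj Hpm Hmq) (g m) Hpos) as [d [Hd Hball]].
    set (s := Rmax p (m - d / 2)).
    assert (Hs : p <= s < m) by (unfold s, Rmax; destruct Rle_dec; lra).
    assert (Hsm : Rabs (s - m) < d)
      by (unfold s, Rmax; destruct Rle_dec; unfold Rabs; destruct Rcase_abs; lra).
    specialize (Hball s ltac:(lra) Hsm). specialize (Hbelow s Hs).
    apply Rabs_def2 in Hball. lra. }
  assert (Hgm_ge : 0 <= g m).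
  { destruct (Rle_lt_dec 0 (g m)) as [|Hneg]; [assumption|exfalso].
    assert (Hmq' : m < q) by (destruct (Req_dec m q); [subst; lra|lra]).
    destruct (continuous_on_ball _ g m Hg (conj Hpm Hmq) (- g m) ltac:(lra)) as [d [Hd Hball]].
    set (s := Rmin q (m + d / 2)).
    assert (Hs : m < s <= q) by (unfold s, Rmin; destruct Rle_dec; lra).
    enough (E s) by (specialize (Hub s H); lra).
    split; [lra|]. intros z Hz. destruct (Rlt_dec z m); [apply Hbelow; lra|].
    assert (Hzm : Rabs (z - m) < d)
      by (unfold s, Rmin in Hz; destruct Rle_dec; unfold Rabs; destruct Rcase_abs; lra).
    specialize (Hball z ltac:(lra) Hzm). apply Rabs_def2 in Hball. lra. }
  exists m. split; [|split; [lra|]].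
  - split; [|assumption]. destruct (Req_dec m p); [subst; lra|lra].
  - intros x Hx. destruct (Rlt_dec x m); [left; apply Hbelow; lra|].
    replace x with m by lra. lra.
Qed.

Lemma last_zero_before p q (g : R -> R) : p <= q -> continuous_on (Icc p q) g ->
  g q < 0 -> 0 <= g p ->
  exists x0, p <= x0 < q /\ g x0 = 0 /\ forall x, x0 <= x <= q -> g x <= 0.
Proof.
  intros Hpq Hg Hq Hp.
  destruct (first_zero_after p q (fun t => g (p + q - t))) as [x0 [Hx0 [Hz Hneg]]];
    [assumption| |now replace (p + q - p) with q by ring|now replace (p + q - q) with p by ring|].
  - intros x Hx. eapply filterlim_comp; [|apply Hg; lra].
    intros P [e He]. exists e. intros t Ht Dt. apply He; [|lra].
    change (Rabs (p + q - t - (p + q - x)) < e).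
    replace (p + q - t - (p + q - x)) with (- (t - x)) by ring. rewrite Rabs_Ropp. exact Ht.
  - exists (p + q - x0). split; [lra|split; [exact Hz|]].
    intros x Hx. specialize (Hneg (p + q - x) ltac:(lra)).
    now replace (p + q - (p + q - x)) with x in Hneg by ring.
Qed.

(* [u] is the flux [(1 + c y) y']: the equation [((1 + c y) y')' + 2 x y' = 0] and the
   boundary condition at 0 become [u' = - 2 x y'] and [u 0 = gamma * y 0]. *)
Record flux_system (lam gamma c : R) (y u : R -> R) : Prop := {
  flux_c_ge0 : 0 <= c;
  flux_range : forall x, 0 <= x <= lam -> 0 <= y x <= 1;
  flux_y_cont : continuous_on (Icc 0 lam) y;
  flux_u_cont : continuous_on (fun t => 0 <= t < lam) u;
  flux_u0 : u 0 = gamma * y 0;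
  flux_y_derive : forall x, 0 < x < lam -> is_derive y x (u x / (1 + c * y x));
  flux_u_derive : forall x, 0 < x < lam -> is_derive u x (- (2 * x) * (u x / (1 + c * y x)))
}.

Arguments flux_c_ge0 {lam gamma c y u}.
Arguments flux_range {lam gamma c y u}.
Arguments flux_y_cont {lam gamma c y u}.
Arguments flux_u_cont {lam gamma c y u}.
Arguments flux_u0 {lam gamma c y u}.
Arguments flux_y_derive {lam gamma c y u}.
Arguments flux_u_derive {lam gamma c y u}.

Section Flux.

Variables (lam gamma c : R) (y u : R -> R).
Hypotheses (Hlam : 0 < lam) (Hgamma : 0 < gamma) (G : flux_system lam gamma c y u).

Lemma flux_denom_ge1 x : 0 <= x <= lam -> 1 <= 1 + c * y x.
Proof. intros Hx. pose proof (flux_c_ge0 G). pose proof (flux_range G x Hx). nra. Qed.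

Lemma flux_u_cont_Icc t : t < lam -> continuous_on (Icc 0 t) u.
Proof.
  intros Ht. apply (continuous_on_subset (fun t => 0 <= t < lam)); [intros x Hx; lra|].
  exact (flux_u_cont G).
Qed.

Lemma flux_sq_derive x : 0 < x < lam ->
  is_derive (fun t => u t * u t) x (- (4 * x) * (u x * u x / (1 + c * y x))).
Proof.
  intros Hx. pose proof (flux_denom_ge1 x ltac:(lra)).
  eapply is_derive_eq; [apply is_derive_Rmult; apply (flux_u_derive G), Hx|field; lra].
Qed.

(* If [y 0 = 0] then [u 0 = 0]; as [u^2] is nonincreasing, [u] and hence [y'] vanish. *)
Lemma flux_y0_pos : 0 < y lam -> 0 < y 0.
Proof.
  intros Hend. destruct (proj1 (flux_range G 0 ltac:(lra))) as [|Hy0]; [assumption|exfalso].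
  assert (Hu : forall t, 0 <= t < lam -> u t = 0).
  { intros t Ht.
    assert (Hsq : u t * u t <= u 0 * u 0).
    { eapply (ge_of_derive_nonpos 0 t (fun s => u s * u s) _ ltac:(lra)).
      - apply continuous_on_mult; apply flux_u_cont_Icc; lra.
      - intros x Hx. apply flux_sq_derive. lra.
      - intros x Hx. pose proof (flux_denom_ge1 x ltac:(lra)).
        assert (0 <= u x * u x / (1 + c * y x)) by (apply Rdiv_le_0_compat; nra).
        nra. }
    rewrite (flux_u0 G), <- Hy0 in Hsq. nra. }
  assert (y lam <= y 0); [|lra].
  apply (ge_of_derive_nonpos 0 lam y _ ltac:(lra) (flux_y_cont G) (flux_y_derive G)).
  intros x Hx. rewrite Hu by lra. unfold Rdiv. lra.
Qed.

Hypothesis Hy0 : 0 < y 0.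

(* Gronwall for [- u^2], since [(u^2)' >= - 4 lam u^2]. *)
Lemma flux_neq0 t : 0 <= t < lam -> u t <> 0.
Proof.
  intros Ht Hut.
  assert (Hgrow : - (u t * u t) <= - (u 0 * u 0) * exp (- (4 * lam) * (t - 0))).
  { apply (gronwall_le 0 t (fun s => - (u s * u s))
      (fun x => 4 * x * (u x * u x / (1 + c * y x)))); [lra| | |].
    - apply continuous_on_opp, continuous_on_mult; apply flux_u_cont_Icc; lra.
    - intros x Hx. eapply is_derive_eq;
        [apply is_derive_Ropp, flux_sq_derive; lra|ring].
    - intros x Hx. pose proof (flux_denom_ge1 x ltac:(lra)).
      assert (u x * u x / (1 + c * y x) <= u x * u x).
      { apply Rle_div_l; [lra|]. nra. }
      assert (0 <= u x * u x / (1 + c * y x)) by (apply Rdiv_le_0_compat; nra).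
      nra. }
  rewrite Hut, (flux_u0 G) in Hgrow. pose proof (exp_pos (- (4 * lam) * (t - 0))).
  assert (0 < gamma * y 0 * (gamma * y 0)) by (apply Rmult_lt_0_compat; apply Rmult_lt_0_compat; lra).
  nra.
Qed.

Lemma flux_pos t : 0 <= t < lam -> 0 < u t.
Proof.
  intros Ht. destruct (Rlt_le_dec 0 (u t)) as [|Hle]; [assumption|exfalso].
  pose proof (flux_neq0 t Ht).
  destruct (first_zero_after 0 t (fun s => - u s)) as [x0 [Hx0 [Hz _]]]; [lra| | | |].
  - apply continuous_on_opp, flux_u_cont_Icc. lra.
  - rewrite (flux_u0 G). pose proof (Rmult_lt_0_compat _ _ Hgamma Hy0). lra.
  - lra.
  - apply (flux_neq0 x0); lra.
Qed.

Lemma flux_le_u0 t : 0 <= t < lam -> u t <= gamma * y 0.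
Proof.
  intros Ht. rewrite <- (flux_u0 G).
  eapply (ge_of_derive_nonpos 0 t u _ ltac:(lra) (flux_u_cont_Icc t ltac:(lra))).
  - intros x Hx. apply (flux_u_derive G). lra.
  - intros x Hx. pose proof (flux_denom_ge1 x ltac:(lra)). pose proof (flux_pos x ltac:(lra)).
    assert (0 <= u x / (1 + c * y x)) by (apply Rdiv_le_0_compat; lra).
    nra.
Qed.

End Flux.

Arguments flux_denom_ge1 {lam gamma c y u}.
Arguments flux_u_cont_Icc {lam gamma c y u}.
Arguments flux_y0_pos {lam gamma c y u}.
Arguments flux_pos {lam gamma c y u}.
Arguments flux_le_u0 {lam gamma c y u}.

(* Kirchhoff transform: [(kirchhoff c (y x))' = (1 + c y) y' = u]. *)
Definition kirchhoff (c s : R) := s + c / 2 * (s * s).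

Lemma kirchhoff_sub c a b : kirchhoff c b - kirchhoff c a = (b - a) * (1 + c / 2 * (a + b)).
Proof. unfold kirchhoff. ring. Qed.

Lemma kirchhoff_lt c a b : 0 <= c -> 0 <= a -> a < b -> kirchhoff c a < kirchhoff c b.
Proof.
  intros Hc Ha Hab. enough (0 < kirchhoff c b - kirchhoff c a) by lra.
  rewrite kirchhoff_sub. apply Rmult_lt_0_compat; [lra|]. assert (0 <= c / 2) by lra. nra.
Qed.

Lemma kirchhoff_dist c1 c2 a1 a2 : 0 <= c1 <= c2 -> 0 <= a1 <= 1 -> 0 <= a2 <= 1 ->
  Rabs (a1 - a2) <= Rabs (kirchhoff c2 a2 - kirchhoff c1 a1) + (c2 - c1) / 2.
Proof.
  intros Hc H1 H2.
  replace (kirchhoff c2 a2 - kirchhoff c1 a1)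
    with ((a2 - a1) * (1 + c2 / 2 * (a1 + a2)) + (c2 - c1) / 2 * (a1 * a1))
    by (unfold kirchhoff; field).
  assert (1 <= 1 + c2 / 2 * (a1 + a2)) by (assert (0 <= c2 / 2) by lra; nra).
  assert (a1 * a1 <= 1) by nra.
  unfold Rabs. repeat destruct Rcase_abs; nra.
Qed.

Section TwoFluxes.

Variables (lam gamma c1 c2 : R) (y1 u1 y2 u2 : R -> R).
Hypotheses (Hgamma : 0 < gamma)
  (G1 : flux_system lam gamma c1 y1 u1) (G2 : flux_system lam gamma c2 y2 u2).

Lemma kirchhoff_gap_derive x : 0 < x < lam ->
  is_derive (fun t => kirchhoff c2 (y2 t) - kirchhoff c1 (y1 t)) x (u2 x - u1 x).
Proof.
  intros Hx. unfold kirchhoff.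
  pose proof (flux_denom_ge1 G1 x ltac:(lra)).
  pose proof (flux_denom_ge1 G2 x ltac:(lra)).
  pose proof (flux_y_derive G1 x Hx). pose proof (flux_y_derive G2 x Hx).
  eapply is_derive_eq.
  - apply is_derive_Rminus; apply is_derive_Rplus; try eassumption;
      apply is_derive_scal, is_derive_Rmult; eassumption.
  - field. lra.
Qed.

Lemma kirchhoff_gap_cont :
  continuous_on (Icc 0 lam) (fun t => kirchhoff c2 (y2 t) - kirchhoff c1 (y1 t)).
Proof.
  unfold kirchhoff. pose proof (flux_y_cont G1). pose proof (flux_y_cont G2).
  apply continuous_on_minus; apply continuous_on_plus; try assumption;
    repeat apply continuous_on_mult; try assumption; apply continuous_on_const.
Qed.

Hypothesis Hy10 : 0 < y1 0.

Lemma flux_ratio_derive x : 0 < x < lam ->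
  is_derive (fun t => u2 t / u1 t) x
    (u2 x / u1 x * (2 * x * (c2 * y2 x - c1 * y1 x) / ((1 + c1 * y1 x) * (1 + c2 * y2 x)))).
Proof.
  intros Hx.
  pose proof (flux_denom_ge1 G1 x ltac:(lra)).
  pose proof (flux_denom_ge1 G2 x ltac:(lra)).
  pose proof (flux_pos Hgamma G1 Hy10 x ltac:(lra)).
  eapply is_derive_eq.
  - apply is_derive_Rmult; [apply (flux_u_derive G2), Hx|].
    apply is_derive_inv; [apply (flux_u_derive G1), Hx|lra].
  - cbv beta. field. repeat split; lra.
Qed.

Lemma flux_ratio_cont t : t < lam -> continuous_on (Icc 0 t) (fun s => u2 s / u1 s).
Proof.
  intros Ht. apply continuous_on_mult; [apply (flux_u_cont_Icc G2 t Ht)|].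
  apply continuous_on_inv; [apply (flux_u_cont_Icc G1 t Ht)|].
  intros x Hx. pose proof (flux_pos Hgamma G1 Hy10 x ltac:(lra)). lra.
Qed.

Hypothesis Hy20 : 0 < y2 0.

Lemma flux_ratio_incr s t : 0 <= s <= t -> t < lam ->
  (forall x, s < x < t -> c1 * y1 x <= c2 * y2 x) -> u2 s / u1 s <= u2 t / u1 t.
Proof.
  intros Hs Ht Hc.
  eapply (le_of_derive_nonneg s t (fun z => u2 z / u1 z) _ ltac:(lra)).
  - apply (continuous_on_subset (Icc 0 t)); [intros x Hx; lra|apply flux_ratio_cont, Ht].
  - intros x Hx. apply flux_ratio_derive. lra.
  - intros x Hx. specialize (Hc x Hx).
    pose proof (flux_denom_ge1 G1 x ltac:(lra)).
    pose proof (flux_denom_ge1 G2 x ltac:(lra)).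
    pose proof (flux_pos Hgamma G1 Hy10 x ltac:(lra)).
    pose proof (flux_pos Hgamma G2 Hy20 x ltac:(lra)).
    apply Rmult_le_pos; apply Rdiv_le_0_compat; nra.
Qed.

Lemma flux_ratio_decr s t : 0 <= s <= t -> t < lam ->
  (forall x, s < x < t -> c2 * y2 x <= c1 * y1 x) -> u2 t / u1 t <= u2 s / u1 s.
Proof.
  intros Hs Ht Hc.
  eapply (ge_of_derive_nonpos s t (fun z => u2 z / u1 z) _ ltac:(lra)).
  - apply (continuous_on_subset (Icc 0 t)); [intros x Hx; lra|apply flux_ratio_cont, Ht].
  - intros x Hx. apply flux_ratio_derive. lra.
  - intros x Hx. specialize (Hc x Hx).
    pose proof (flux_denom_ge1 G1 x ltac:(lra)).
    pose proof (flux_denom_ge1 G2 x ltac:(lra)).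
    pose proof (flux_pos Hgamma G1 Hy10 x ltac:(lra)).
    pose proof (flux_pos Hgamma G2 Hy20 x ltac:(lra)).
    assert (0 <= u2 x / u1 x) by (apply Rdiv_le_0_compat; lra).
    assert (2 * x * (c2 * y2 x - c1 * y1 x) / ((1 + c1 * y1 x) * (1 + c2 * y2 x)) <= 0).
    { apply Rmult_le_0_r; [nra|]. left. apply Rinv_0_lt_compat. nra. }
    nra.
Qed.

End TwoFluxes.

Arguments kirchhoff_gap_derive {lam gamma c1 c2 y1 u1 y2 u2}.
Arguments kirchhoff_gap_cont {lam gamma c1 c2 y1 u1 y2 u2}.
Arguments flux_ratio_derive {lam gamma c1 c2 y1 u1 y2 u2}.
Arguments flux_ratio_cont {lam gamma c1 c2 y1 u1 y2 u2}.
Arguments flux_ratio_incr {lam gamma c1 c2 y1 u1 y2 u2}.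
Arguments flux_ratio_decr {lam gamma c1 c2 y1 u1 y2 u2}.

Section SameParameter.

Variables (lam gamma c : R) (v uv w uw : R -> R).
Hypotheses (Hlam : 0 < lam) (Hgamma : 0 < gamma)
  (Gv : flux_system lam gamma c v uv) (Gw : flux_system lam gamma c w uw)
  (Hv_end : 0 < v lam) (Hvw_end : v lam < w lam).

Let Hv0 : 0 < v 0 := flux_y0_pos Hlam Gv Hv_end.
Let Hw0 : 0 < w 0 := flux_y0_pos Hlam Gw (Rlt_trans _ _ _ Hv_end Hvw_end).

Let diff_cont p q : 0 <= p -> q <= lam -> continuous_on (Icc p q) (fun t => w t - v t).
Proof.
  intros Hp Hq. apply (continuous_on_subset (Icc 0 lam)); [intros t Ht; lra|].
  apply continuous_on_minus; [apply (flux_y_cont Gw)|apply (flux_y_cont Gv)].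
Qed.

Lemma kirchhoff_gap_lt x : 0 <= x <= lam -> w x < v x -> kirchhoff c (w x) < kirchhoff c (v x).
Proof.
  intros Hx Hlt. apply kirchhoff_lt; [apply (flux_c_ge0 Gv)|apply (flux_range Gw x Hx)|exact Hlt].
Qed.

(* Otherwise [uw / uv <= 1] until [w] meets [v] again at [x0], so the Kirchhoff gap,
   negative at [x1], cannot climb back to [0] at [x0]. *)
Lemma flux_lt_of_solution_gt x1 : 0 <= x1 <= lam -> w x1 < v x1 -> uv x1 < uw x1.
Proof.
  intros Hx1 Hbelow.
  destruct (first_zero_after x1 lam (fun t => w t - v t)) as [x0 [Hx0 [Hz Hneg]]];
    [lra|apply diff_cont; lra|lra|lra|].
  assert (Hx0_lt : x0 < lam) by (destruct (Req_dec x0 lam); [subst; lra|lra]).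
  destruct (Rlt_le_dec (uv x1) (uw x1)) as [|Hle]; [assumption|exfalso].
  assert (Hflux : forall s, x1 <= s < x0 -> uw s <= uv s).
  { intros s Hs.
    assert (Hratio : uw s / uv s <= uw x1 / uv x1).
    { apply (flux_ratio_decr Hgamma Gv Gw Hv0 Hw0 x1 s); [lra|lra|].
      intros x Hx. specialize (Hneg x ltac:(lra)). pose proof (flux_c_ge0 Gv). nra. }
    pose proof (flux_pos Hgamma Gv Hv0 x1 ltac:(lra)).
    pose proof (flux_pos Hgamma Gv Hv0 s ltac:(lra)).
    apply (Rdiv_le_1 (uw s) (uv s)); [lra|].
    eapply Rle_trans; [exact Hratio|]. apply (Rdiv_le_1 (uw x1) (uv x1)); lra. }
  assert (Hgap : kirchhoff c (w x0) - kirchhoff c (v x0) <= kirchhoff c (w x1) - kirchhoff c (v x1)).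
  { eapply (ge_of_derive_nonpos x1 x0 (fun t => kirchhoff c (w t) - kirchhoff c (v t))); [lra| | |].
    - apply (continuous_on_subset (Icc 0 lam)); [intros t Ht; lra|exact (kirchhoff_gap_cont Gv Gw)].
    - intros x Hx. apply (kirchhoff_gap_derive Gv Gw). lra.
    - intros x Hx. specialize (Hflux x ltac:(lra)). lra. }
  replace (w x0) with (v x0) in Hgap by lra.
  pose proof (kirchhoff_gap_lt x1 Hx1 Hbelow). lra.
Qed.

(* If [w x < v x], then [uv x < uw x]; on [[x0, x]], with [x0] the last point before [x]
   where [w = v], this forces [uv <= uw], so the Kirchhoff gap cannot drop from [0] to a
   negative value. *)
Lemma solution_le_of_end_lt x : 0 <= x <= lam -> v x <= w x.
Proof.
  intros Hx. destruct (Rle_lt_dec (v x) (w x)) as [|Hbelow]; [assumption|exfalso].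
  assert (Hstart : 0 <= w 0 - v 0).
  { destruct (Rle_lt_dec 0 (w 0 - v 0)) as [|Hlt]; [assumption|exfalso].
    pose proof (flux_lt_of_solution_gt 0 ltac:(lra) ltac:(lra)) as Hu0.
    rewrite (flux_u0 Gv), (flux_u0 Gw) in Hu0. apply Rmult_lt_reg_l in Hu0; lra. }
  assert (Hx_pos : 0 < x) by (destruct (Req_dec x 0); [subst; lra|lra]).
  assert (Hx_lt : x < lam) by (destruct (Req_dec x lam); [subst; lra|lra]).
  pose proof (flux_lt_of_solution_gt x Hx Hbelow) as Hux.
  destruct (last_zero_before 0 x (fun t => w t - v t)) as [x0 [Hx0 [Hz Hneg]]];
    [lra|apply diff_cont; lra|lra|exact Hstart|].
  assert (Hflux : forall s, x0 <= s <= x -> uv s <= uw s).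
  { intros s Hs.
    assert (Hratio : uw x / uv x <= uw s / uv s).
    { apply (flux_ratio_decr Hgamma Gv Gw Hv0 Hw0 s x); [lra|lra|].
      intros z Hz'. specialize (Hneg z ltac:(lra)). pose proof (flux_c_ge0 Gv). nra. }
    pose proof (flux_pos Hgamma Gv Hv0 x ltac:(lra)).
    pose proof (flux_pos Hgamma Gv Hv0 s ltac:(lra)).
    assert (Hs1 : 1 <= uw s / uv s).
    { eapply Rle_trans; [|exact Hratio]. apply (Rle_div_r 1 (uw x) (uv x)); lra. }
    apply (Rle_div_r 1 (uw s) (uv s)) in Hs1; lra. }
  assert (Hgap : kirchhoff c (w x0) - kirchhoff c (v x0) <= kirchhoff c (w x) - kirchhoff c (v x)).
  { eapply (le_of_derive_nonneg x0 x (fun t => kirchhoff c (w t) - kirchhoff c (v t))); [lra| | |].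
    - apply (continuous_on_subset (Icc 0 lam)); [intros t Ht; lra|exact (kirchhoff_gap_cont Gv Gw)].
    - intros z Hz'. apply (kirchhoff_gap_derive Gv Gw). lra.
    - intros z Hz'. specialize (Hflux z ltac:(lra)). lra. }
  replace (w x0) with (v x0) in Hgap by lra.
  pose proof (kirchhoff_gap_lt x Hx Hbelow). lra.
Qed.

End SameParameter.

Lemma flux_system_scale lam gamma c1 c2 y u k : flux_system lam gamma c1 y u ->
  0 < k <= 1 -> c1 = c2 * k -> 0 <= c2 ->
  flux_system lam gamma c2 (fun t => k * y t) (fun t => k * u t).
Proof.
  intros G Hk Hc Hc2.
  assert (HD : forall x, 0 < x < lam -> 1 + c2 * (k * y x) = 1 + c1 * y x)
    by (intros; subst; ring).
  constructor.
  - exact Hc2.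
  - intros x Hx. pose proof (flux_range G x Hx). nra.
  - apply continuous_on_mult; [apply continuous_on_const|apply (flux_y_cont G)].
  - apply continuous_on_mult; [apply continuous_on_const|apply (flux_u_cont G)].
  - rewrite (flux_u0 G). ring.
  - intros x Hx. rewrite HD by exact Hx.
    eapply is_derive_eq; [apply is_derive_scal, (flux_y_derive G x Hx)|unfold Rdiv; ring].
  - intros x Hx. rewrite HD by exact Hx.
    eapply is_derive_eq; [apply is_derive_scal, (flux_u_derive G x Hx)|unfold Rdiv; ring].
Qed.

(* [(c1 / c2) y1] solves the problem for [c2] with end value [c1 / c2 < 1 = y2 lam]. *)
Lemma param_times_solution_le lam gamma c1 c2 y1 u1 y2 u2 : 0 < lam -> 0 < gamma -> c1 < c2 ->
  flux_system lam gamma c1 y1 u1 -> flux_system lam gamma c2 y2 u2 ->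
  y1 lam = 1 -> y2 lam = 1 ->
  forall x, 0 <= x <= lam -> c1 * y1 x <= c2 * y2 x.
Proof.
  intros Hlam Hgamma Hc G1 G2 E1 E2 x Hx.
  pose proof (flux_c_ge0 G1). pose proof (flux_range G2 x Hx).
  destruct (Req_dec c1 0) as [->|Hc1]; [nra|].
  set (k := c1 / c2).
  assert (Hk : 0 < k < 1).
  { unfold k. split; [apply Rdiv_lt_0_compat; lra|]. apply (Rdiv_lt_1 c1 c2); lra. }
  assert (Hck : c1 = c2 * k) by (unfold k; field; lra).
  pose proof (flux_system_scale _ _ _ _ _ _ k G1 ltac:(lra) Hck ltac:(lra)) as Gk.
  pose proof (solution_le_of_end_lt lam gamma c2 _ _ y2 u2 Hlam Hgamma Gk G2) as Hle.
  cbv beta in Hle. rewrite E1, E2 in Hle. specialize (Hle ltac:(lra) ltac:(lra) x Hx).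
  rewrite Hck. nra.
Qed.

Definition gronwall_const (lam b : R) := 2 * lam ^ 2 * (1 + b) * exp (2 * lam ^ 2 * (1 + b) * b).

Definition lipschitz_const (lam gamma b : R) :=
  1 + (1 + b + gamma * lam) * gamma * lam * gronwall_const lam b.

Lemma gronwall_const_ge0 lam b : 0 <= b -> 0 <= gronwall_const lam b.
Proof.
  intros Hb. unfold gronwall_const. pose proof (exp_pos (2 * lam ^ 2 * (1 + b) * b)).
  assert (0 <= lam ^ 2) by (rewrite <- Rsqr_pow2; apply Rle_0_sqr).
  apply Rmult_le_pos; [|lra]. apply Rmult_le_pos; lra.
Qed.

Lemma lipschitz_const_ge1 lam gamma b : 0 < lam -> 0 < gamma -> 0 <= b ->
  1 <= lipschitz_const lam gamma b.
Proof.
  intros Hlam Hgamma Hb. unfold lipschitz_const. pose proof (gronwall_const_ge0 lam b Hb).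
  enough (0 <= (1 + b + gamma * lam) * gamma * lam * gronwall_const lam b) by lra.
  apply Rmult_le_pos; [|assumption]. apply Rmult_le_pos; [|lra]. apply Rmult_le_pos; nra.
Qed.

Section LipschitzEstimate.

Variables (lam gamma b c1 c2 : R) (y1 u1 y2 u2 : R -> R).
Hypotheses (Hlam : 0 < lam) (Hgamma : 0 < gamma) (Hc1 : 0 <= c1) (Hc12 : c1 < c2) (Hc2b : c2 <= b)
  (G1 : flux_system lam gamma c1 y1 u1) (G2 : flux_system lam gamma c2 y2 u2)
  (E1 : y1 lam = 1) (E2 : y2 lam = 1).

Local Notation gap t := (kirchhoff c2 (y2 t) - kirchhoff c1 (y1 t)).
Local Notation ratio t := (u2 t / u1 t).

Let y10_pos : 0 < y1 0.
Proof. apply (flux_y0_pos Hlam G1). lra. Qed.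

Let y20_pos : 0 < y2 0.
Proof. apply (flux_y0_pos Hlam G2). lra. Qed.

Let scaled_le x : 0 <= x <= lam -> c1 * y1 x <= c2 * y2 x :=
  param_times_solution_le lam gamma c1 c2 y1 u1 y2 u2 Hlam Hgamma Hc12 G1 G2 E1 E2 x.

Lemma kirchhoff_gap_end : gap lam = (c2 - c1) / 2.
Proof. rewrite E1, E2. unfold kirchhoff. field. Qed.

Lemma kirchhoff_gap_le s t k : 0 <= s <= t -> t <= lam -> (forall x, s < x < t -> u2 x - u1 x <= k) ->
  gap t <= gap s + k * (t - s).
Proof.
  intros Hs Ht Hk.
  enough (gap t - k * t <= gap s - k * s) by lra.
  apply (ge_of_derive_nonpos s t (fun z => gap z - k * z) (fun z => u2 z - u1 z - k)); [lra| | |].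
  - apply continuous_on_minus.
    + apply (continuous_on_subset (Icc 0 lam)); [intros z Hz; lra|exact (kirchhoff_gap_cont G1 G2)].
    + apply continuous_on_mult; [apply continuous_on_const|apply continuous_on_id].
  - intros x Hx.
    apply is_derive_Rminus; [apply (kirchhoff_gap_derive G1 G2); lra|apply is_derive_linear].
  - intros x Hx. specialize (Hk x Hx). lra.
Qed.

Lemma kirchhoff_gap_ge s t k : 0 <= s <= t -> t <= lam -> (forall x, s < x < t -> - k <= u2 x - u1 x) ->
  gap s - k * (t - s) <= gap t.
Proof.
  intros Hs Ht Hk.
  enough (gap s + k * s <= gap t + k * t) by lra.
  apply (le_of_derive_nonneg s t (fun z => gap z + k * z) (fun z => u2 z - u1 z + k)); [lra| | |].
  - apply continuous_on_plus.
    + apply (continuous_on_subset (Icc 0 lam)); [intros z Hz; lra|exact (kirchhoff_gap_cont G1 G2)].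
    + apply continuous_on_mult; [apply continuous_on_const|apply continuous_on_id].
  - intros x Hx. apply is_derive_Rplus; [apply (kirchhoff_gap_derive G1 G2); lra|apply is_derive_linear].
  - intros x Hx. specialize (Hk x Hx). lra.
Qed.

Lemma flux_ratio_monotone s t : 0 <= s <= t -> t < lam -> ratio s <= ratio t.
Proof.
  intros Hs Ht. apply (flux_ratio_incr Hgamma G1 G2 y10_pos y20_pos s t Hs Ht).
  intros x Hx. apply scaled_le. lra.
Qed.

Lemma flux_ratio_0 : ratio 0 = y2 0 / y1 0.
Proof. rewrite (flux_u0 G1), (flux_u0 G2). field. split; [pose proof y10_pos|]; lra. Qed.

Lemma kirchhoff_gap_abs_le_of_y0_le : y1 0 <= y2 0 ->
  forall x, 0 <= x <= lam -> Rabs (gap x) <= (c2 - c1) / 2.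
Proof.
  intros Ha x Hx. pose proof y10_pos.
  assert (Hflux : forall z, 0 < z < lam -> u1 z <= u2 z).
  { intros z Hz.
    assert (Hr : 1 <= ratio z).
    { eapply Rle_trans; [|apply (flux_ratio_monotone 0 z); lra]. rewrite flux_ratio_0.
      apply (Rle_div_r 1 (y2 0) (y1 0)); lra. }
    apply (Rle_div_r 1 (u2 z) (u1 z)) in Hr; [lra|]. apply (flux_pos Hgamma G1 y10_pos). lra. }
  assert (Hgap0 : 0 <= gap 0).
  { pose proof (flux_range G1 0 ltac:(lra)). unfold kirchhoff.
    assert (c1 / 2 * (y1 0 * y1 0) <= c2 / 2 * (y2 0 * y2 0))
      by (apply Rmult_le_compat; nra).
    lra. }
  pose proof (kirchhoff_gap_ge 0 x 0 ltac:(lra) ltac:(lra)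
                ltac:(intros z Hz; specialize (Hflux z ltac:(lra)); lra)).
  pose proof (kirchhoff_gap_ge x lam 0 ltac:(lra) ltac:(lra)
                ltac:(intros z Hz; specialize (Hflux z ltac:(lra)); lra)).
  rewrite kirchhoff_gap_end in *. apply Rabs_le. lra.
Qed.

Lemma kirchhoff_gap0_le : y2 0 <= y1 0 -> gap 0 <= (c2 - c1) / 2 - (y1 0 - y2 0).
Proof.
  intros Ha. pose proof y20_pos. pose proof (flux_range G1 0 ltac:(lra)).
  assert (y2 0 * y2 0 <= y1 0 * y1 0) by nra.
  assert (c2 * (y2 0 * y2 0) <= c2 * (y1 0 * y1 0)) by (apply Rmult_le_compat_l; lra).
  assert (y1 0 * y1 0 <= 1) by nra.
  assert ((c2 - c1) * (y1 0 * y1 0) <= c2 - c1) by nra.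
  unfold kirchhoff. lra.
Qed.

Lemma kirchhoff_gap0_ge : y2 0 <= y1 0 -> - (1 + b) * (y1 0 - y2 0) <= gap 0.
Proof.
  intros Ha. pose proof y20_pos. pose proof (flux_range G1 0 ltac:(lra)).
  unfold kirchhoff. assert (c1 / 2 * (y1 0 + y2 0) <= b) by nra. nra.
Qed.

Section InitialGap.

Hypothesis Ha : y2 0 < y1 0.

Lemma kirchhoff_gap_le_half t : 0 <= t <= lam -> gap t <= (c2 - c1) / 2.
Proof.
  intros Ht. destruct (Req_dec t lam) as [->|Hne]; [rewrite kirchhoff_gap_end; lra|].
  pose proof (kirchhoff_gap0_le ltac:(lra)).
  destruct (Rle_lt_dec 1 (ratio t)) as [Hge|Hlt].
  - rewrite <- kirchhoff_gap_end. replace (gap t) with (gap t - 0 * (lam - t)) by ring.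
    apply (kirchhoff_gap_ge t lam 0); [lra|lra|]. intros z Hz.
    pose proof (flux_ratio_monotone t z ltac:(lra) ltac:(lra)) as Hr.
    assert (Hr1 : 1 <= ratio z) by lra.
    apply (Rle_div_r 1 (u2 z) (u1 z)) in Hr1; [lra|]. apply (flux_pos Hgamma G1 y10_pos). lra.
  - enough (gap t <= gap 0 + 0 * (t - 0)) by lra.
    apply (kirchhoff_gap_le 0 t 0); [lra|lra|]. intros z Hz.
    pose proof (flux_ratio_monotone z t ltac:(lra) ltac:(lra)) as Hr.
    assert (Hr1 : ratio z <= 1) by lra.
    apply (Rle_div_l (u2 z) 1 (u1 z)) in Hr1; [lra|]. apply (flux_pos Hgamma G1 y10_pos). lra.
Qed.

Lemma param_times_solution_gap_le t : 0 <= t <= lam -> c2 * y2 t - c1 * y1 t <= (1 + b) * (c2 - c1).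
Proof.
  intros Ht. pose proof (kirchhoff_gap_le_half t Ht).
  pose proof (flux_range G1 t Ht). pose proof (flux_range G2 t Ht).
  assert (E : gap t = (y2 t - y1 t) * (1 + c2 / 2 * (y1 t + y2 t)) + (c2 - c1) / 2 * (y1 t * y1 t))
    by (unfold kirchhoff; field).
  assert (1 <= 1 + c2 / 2 * (y1 t + y2 t)) by (assert (0 <= c2 / 2) by lra; nra).
  assert (0 <= (c2 - c1) / 2 * (y1 t * y1 t)) by (apply Rmult_le_pos; nra).
  replace (c2 * y2 t - c1 * y1 t) with (c2 * (y2 t - y1 t) + (c2 - c1) * y1 t) by ring.
  destruct (Rle_lt_dec (y2 t - y1 t) 0).
  - assert (c2 * (y2 t - y1 t) <= 0) by nra. nra.
  - assert (y2 t - y1 t <= (c2 - c1) / 2) by nra. nra.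
Qed.

Lemma flux_ratio_growth_le x : 0 < x < lam ->
  2 * x * (c2 * y2 x - c1 * y1 x) / ((1 + c1 * y1 x) * (1 + c2 * y2 x)) <= 2 * lam * (1 + b) * (c2 - c1).
Proof.
  intros Hx.
  pose proof (flux_denom_ge1 G1 x ltac:(lra)). pose proof (flux_denom_ge1 G2 x ltac:(lra)).
  pose proof (param_times_solution_gap_le x ltac:(lra)). pose proof (scaled_le x ltac:(lra)).
  assert (x * (c2 * y2 x - c1 * y1 x) <= lam * (c2 * y2 x - c1 * y1 x)) by nra.
  assert (lam * (c2 * y2 x - c1 * y1 x) <= lam * ((1 + b) * (c2 - c1))) by nra.
  assert (1 <= (1 + c1 * y1 x) * (1 + c2 * y2 x)) by nra.
  assert (0 <= 2 * lam * (1 + b) * (c2 - c1)) by (apply Rmult_le_pos; nra).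
  apply Rle_div_l; nra.
Qed.

Lemma flux_ratio_le_exp t : 0 <= t < lam -> ratio t <= exp (2 * lam ^ 2 * (1 + b) * (c2 - c1)).
Proof.
  intros Ht. set (K := 2 * lam * (1 + b) * (c2 - c1)).
  assert (HK0 : 0 <= K) by (unfold K; apply Rmult_le_pos; nra).
  assert (Hgr : ratio t <= ratio 0 * exp (K * (t - 0))).
  { apply (gronwall_le 0 t (fun z => ratio z)
      (fun x => ratio x * (2 * x * (c2 * y2 x - c1 * y1 x) / ((1 + c1 * y1 x) * (1 + c2 * y2 x)))));
      [lra|apply (flux_ratio_cont Hgamma G1 G2 y10_pos); lra| |].
    - intros x Hx. apply (flux_ratio_derive Hgamma G1 G2 y10_pos). lra.
    - intros x Hx. rewrite (Rmult_comm K). apply Rmult_le_compat_l; [|apply flux_ratio_growth_le; lra].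
      pose proof (flux_pos Hgamma G1 y10_pos x ltac:(lra)).
      pose proof (flux_pos Hgamma G2 y20_pos x ltac:(lra)).
      apply Rdiv_le_0_compat; lra. }
  assert (Hr0 : 0 <= ratio 0 < 1).
  { rewrite flux_ratio_0. split; [apply Rdiv_le_0_compat|apply (Rdiv_lt_1 (y2 0) (y1 0))]; lra. }
  assert (HK : exp (K * (t - 0)) <= exp (2 * lam ^ 2 * (1 + b) * (c2 - c1))).
  { apply exp_monotone. replace (2 * lam ^ 2 * (1 + b) * (c2 - c1)) with (K * lam) by (unfold K; ring).
    apply Rmult_le_compat_l; lra. }
  pose proof (exp_pos (K * (t - 0))). nra.
Qed.

(* Integrate [u2 - u1 <= (exp (...) - 1) u1 <= (exp (...) - 1) gamma] over [[0, lam]]: the gap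
   rises from at most [(c2 - c1) / 2 - (y1 0 - y2 0)] to exactly [(c2 - c1) / 2]. *)
Lemma initial_value_gap_le : y1 0 - y2 0 <= gamma * lam * gronwall_const lam b * (c2 - c1).
Proof.
  assert (HX : 0 <= 2 * lam ^ 2 * (1 + b) * (c2 - c1))
    by (assert (0 <= lam ^ 2) by nra; repeat apply Rmult_le_pos; lra).
  set (eps := exp (2 * lam ^ 2 * (1 + b) * (c2 - c1)) - 1).
  assert (Heps0 : 0 <= eps)
    by (unfold eps; pose proof (exp_ineq1_le (2 * lam ^ 2 * (1 + b) * (c2 - c1))); lra).
  assert (Heps : eps <= gronwall_const lam b * (c2 - c1)).
  { unfold eps, gronwall_const.
    replace (2 * lam ^ 2 * (1 + b) * (c2 - c1)) with ((2 * lam ^ 2 * (1 + b)) * (c2 - c1)) by ring.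
    apply exp_sub1_le_lin; [|lra]. assert (0 <= lam ^ 2) by nra. nra. }
  assert (Hgap : gap lam <= gap 0 + gamma * eps * (lam - 0)).
  { apply (kirchhoff_gap_le 0 lam); [lra|lra|]. intros z Hz.
    pose proof (flux_pos Hgamma G1 y10_pos z ltac:(lra)).
    pose proof (flux_le_u0 Hgamma G1 y10_pos z ltac:(lra)).
    pose proof (flux_range G1 0 ltac:(lra)).
    pose proof (flux_ratio_le_exp z ltac:(lra)) as Hr.
    apply (Rle_div_l (u2 z) _ (u1 z)) in Hr; [|lra].
    replace (exp (2 * lam ^ 2 * (1 + b) * (c2 - c1))) with (eps + 1) in Hr by (unfold eps; ring).
    assert (u1 z <= gamma) by nra.
    nra. }
  rewrite kirchhoff_gap_end in Hgap. pose proof (kirchhoff_gap0_le ltac:(lra)).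
  assert (gamma * eps * lam <= gamma * lam * (gronwall_const lam b * (c2 - c1))).
  { replace (gamma * eps * lam) with (gamma * lam * eps) by ring. apply Rmult_le_compat_l; nra. }
  nra.
Qed.

(* [u2 >= (y2 0 / y1 0) u1] as the flux ratio increases, so [u2 - u1 >= - gamma (y1 0 - y2 0)]. *)
Lemma kirchhoff_gap_ge_of_y0_gt t : 0 <= t <= lam -> - ((1 + b + gamma * lam) * (y1 0 - y2 0)) <= gap t.
Proof.
  intros Ht. pose proof y10_pos. pose proof (flux_range G1 0 ltac:(lra)).
  assert (Hgap : gap 0 - gamma * (y1 0 - y2 0) * (t - 0) <= gap t).
  { apply (kirchhoff_gap_ge 0 t); [lra|lra|]. intros z Hz.
    pose proof (flux_pos Hgamma G1 y10_pos z ltac:(lra)).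
    pose proof (flux_le_u0 Hgamma G1 y10_pos z ltac:(lra)).
    assert (Hr : y2 0 / y1 0 <= ratio z) by (rewrite <- flux_ratio_0; apply flux_ratio_monotone; lra).
    apply (Rle_div_r _ (u2 z) (u1 z)) in Hr; [|lra].
    assert (Hr' : y2 0 * u1 z <= y1 0 * u2 z).
    { replace (y2 0 * u1 z) with (y1 0 * (y2 0 / y1 0 * u1 z)) by (field; lra).
      apply Rmult_le_compat_l; lra. }
    apply (Rmult_le_reg_l (y1 0)); [lra|]. nra. }
  pose proof (kirchhoff_gap0_ge ltac:(lra)).
  assert (0 <= gamma * (y1 0 - y2 0) * (lam - t)) by (apply Rmult_le_pos; [apply Rmult_le_pos|]; lra).
  nra.
Qed.

End InitialGap.

Lemma kirchhoff_gap_abs_le x : 0 <= x <= lam ->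
  Rabs (gap x) <= (c2 - c1) / 2 + (1 + b + gamma * lam) * gamma * lam * gronwall_const lam b * (c2 - c1).
Proof.
  intros Hx. pose proof (gronwall_const_ge0 lam b ltac:(lra)).
  replace ((1 + b + gamma * lam) * gamma * lam * gronwall_const lam b * (c2 - c1))
    with ((1 + b + gamma * lam) * (gamma * lam * gronwall_const lam b * (c2 - c1))) by ring.
  assert (Hc : 0 <= gamma * lam * gronwall_const lam b * (c2 - c1)).
  { apply Rmult_le_pos; [|lra]. apply Rmult_le_pos; [|assumption]. apply Rmult_le_pos; lra. }
  assert (0 <= 1 + b + gamma * lam) by nra.
  assert (0 <= (1 + b + gamma * lam) * (gamma * lam * gronwall_const lam b * (c2 - c1)))
    by (apply Rmult_le_pos; assumption).
  destruct (Rle_lt_dec (y1 0) (y2 0)) as [Ha|Ha].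
  - pose proof (kirchhoff_gap_abs_le_of_y0_le Ha x Hx). lra.
  - pose proof (kirchhoff_gap_le_half Ha x Hx). pose proof (kirchhoff_gap_ge_of_y0_gt Ha x Hx).
    assert ((1 + b + gamma * lam) * (y1 0 - y2 0)
            <= (1 + b + gamma * lam) * (gamma * lam * gronwall_const lam b * (c2 - c1)))
      by (apply Rmult_le_compat_l; [assumption|apply initial_value_gap_le, Ha]).
    apply Rabs_le. lra.
Qed.

Lemma solution_dist_le x : 0 <= x <= lam ->
  Rabs (y1 x - y2 x) <= lipschitz_const lam gamma b * (c2 - c1).
Proof.
  intros Hx. pose proof (kirchhoff_gap_abs_le x Hx).
  eapply Rle_trans;
    [apply (kirchhoff_dist c1 c2); [lra|apply (flux_range G1 x Hx)|apply (flux_range G2 x Hx)]|].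
  unfold lipschitz_const. rewrite Rmult_plus_distr_r, Rmult_1_l. lra.
Qed.

End LipschitzEstimate.

Lemma CV_radius_ge_of_is_series (a : nat -> R) z l :
  is_series (fun n => a n * z ^ n) l -> Rbar_le (Rabs z) (CV_radius a).
Proof.
  intros Hs. apply (proj1 (CV_radius_bounded a)).
  assert (Hcv : Un_cv (fun n => Rabs (a n * z ^ n)) 0).
  { rewrite <- Rabs_R0. apply cv_cvabs, is_lim_seq_Reals, ex_series_lim_0. now exists l. }
  destruct (cauchy_bound _ (CV_Cauchy _ (exist _ 0 Hcv))) as [M HM].
  exists M. intros n. rewrite RPow_abs, Rabs_mult, Rabs_Rabsolu, <- Rabs_mult.
  apply HM. now exists n.
Qed.

Lemma analytic_on_0l_PSeries lam y x0 : analytic_on_0l lam y -> 0 < lam -> 0 <= x0 <= lam ->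
  exists h A, 0 < h /\ Rbar_le h (CV_radius A) /\
    forall s, 0 <= s <= lam -> Rabs (s - x0) < h -> y s = PSeries A (s - x0).
Proof.
  intros Han Hlam Hx0. destruct (Han x0 Hx0) as [r [Hr [A HA]]].
  set (h := Rmin r lam / 2).
  assert (Hh : 0 < h < r /\ h <= lam / 2).
  { unfold h. pose proof (Rmin_l r lam). pose proof (Rmin_r r lam).
    assert (0 < Rmin r lam) by (apply Rmin_pos; lra). lra. }
  exists h, A. split; [lra|split].
  - set (z := if Rle_dec (x0 + h) lam then x0 + h else x0 - h).
    assert (Hz : 0 <= z <= lam /\ Rabs (z - x0) = h).
    { unfold z. destruct Rle_dec; [replace (x0 + h - x0) with h by ring
                                  |replace (x0 - h - x0) with (- h) by ring; rewrite Rabs_Ropp];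
        (split; [lra|apply Rabs_pos_eq; lra]). }
    destruct Hz as [Hz Hzh]. rewrite <- Hzh.
    apply (CV_radius_ge_of_is_series A _ (y z)), HA; [exact Hz|lra].
  - intros s Hs Hsx. symmetry. apply is_series_unique, HA; [exact Hs|lra].
Qed.

Lemma continuous_on_of_analytic lam y : 0 < lam -> analytic_on_0l lam y -> continuous_on (Icc 0 lam) y.
Proof.
  intros Hlam Han. apply continuous_on_of_locally_eq. intros x Hx.
  destruct (analytic_on_0l_PSeries lam y x Han Hlam Hx) as [h [A [Hh [Hrad Heq]]]].
  exists (fun s => PSeries A (s - x)). split.
  - apply (continuous_comp (fun s => s - x) (PSeries A)).
    + apply (continuous_minus (fun s => s) (fun _ => x)); [apply continuous_id|apply continuous_const].
    + replace (x - x) with 0 by ring. apply continuity_pt_filterlim, PSeries_continuity.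
      rewrite Rabs_R0. eapply Rbar_lt_le_trans; [|exact Hrad]. exact Hh.
  - exists (mkposreal h Hh). intros s Hs Hs'. apply Heq; [exact Hs'|exact Hs].
Qed.

Lemma right_deriv_at_unique (y P : R -> R) x h d l : 0 < h -> is_derive P x l ->
  (forall t, x <= t < x + h -> y t = P t) -> right_deriv_at y x d -> d = l.
Proof.
  intros Hh HP Heq Hd.
  assert (HdP : filterlim (fun t => (P t - P x) / (t - x)) (at_right x) (locally d)).
  { apply (filterlim_ext_loc (fun t => (y t - y x) / (t - x))); [|exact Hd].
    exists (mkposreal h Hh). intros t Ht Hxt. change (Rabs (t - x) < h) in Ht.
    apply Rabs_def2 in Ht. rewrite !Heq; [reflexivity|lra|lra]. }
  assert (Hl : filterlim (fun t => (P t - P x) / (t - x)) (at_right x) (locally l)).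
  { apply is_derive_Reals in HP. apply filterlim_locally. intros eps.
    destruct (HP eps (cond_pos eps)) as [del Hdel].
    exists del. intros t Ht Hxt. change (Rabs (t - x) < del) in Ht.
    change (Rabs ((P t - P x) / (t - x) - l) < eps).
    specialize (Hdel (t - x) ltac:(lra) Ht). now rewrite Rplus_minus in Hdel. }
  exact (filterlim_locally_unique _ _ _ HdP Hl).
Qed.

(* For [t <= 0] the flux takes its value at [0] given by the Robin condition. *)
Definition flux_of (gamma c : R) (y dy : R -> R) (t : R) :=
  if Rle_dec t 0 then gamma * y 0 else (1 + c * y t) * dy t.

Lemma flux_of_near_0 lam gamma c y dy d0 : 0 < lam -> analytic_on_0l lam y ->
  (forall x, 0 < x < lam -> is_derive y x (dy x)) ->
  right_deriv_at y 0 d0 -> d0 + c * y 0 * d0 - gamma * y 0 = 0 ->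
  exists g : R -> R, continuous g 0 /\
    locally 0 (fun t => 0 <= t < lam -> flux_of gamma c y dy t = g t).
Proof.
  intros Hlam Han Hdy Hd0 Hbc.
  destruct (analytic_on_0l_PSeries lam y 0 Han Hlam ltac:(lra)) as [h [A [Hh [Hrad Heq]]]].
  assert (Hin : forall s, Rabs s < h -> Rbar_lt (Rabs s) (CV_radius A))
    by (intros s Hs; eapply Rbar_lt_le_trans; [|exact Hrad]; exact Hs).
  assert (Hy : forall s, 0 <= s < Rmin h lam -> y s = PSeries A s).
  { intros s Hs. pose proof (Rmin_l h lam). pose proof (Rmin_r h lam).
    rewrite Heq, Rminus_0_r; [reflexivity|lra|]. rewrite Rminus_0_r, Rabs_pos_eq; lra. }
  assert (Hmin : 0 < Rmin h lam) by (apply Rmin_pos; lra).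
  assert (HdA : forall s, Rabs s < h -> is_derive (PSeries A) s (PSeries (PS_derive A) s)).
  { intros s Hs. apply is_derive_PSeries, Hin, Hs. }
  assert (Hd0A : d0 = PSeries (PS_derive A) 0).
  { apply (right_deriv_at_unique y (PSeries A) 0 (Rmin h lam));
      [exact Hmin| |intros t Ht; apply Hy; lra|exact Hd0].
    apply HdA. rewrite Rabs_R0. exact Hh. }
  exists (fun s => (1 + c * PSeries A s) * PSeries (PS_derive A) s). split.
  - assert (H0 : Rbar_lt (Rabs 0) (CV_radius A)) by (apply Hin; rewrite Rabs_R0; exact Hh).
    apply (continuous_mult (fun s => 1 + c * PSeries A s) (PSeries (PS_derive A))).
    + apply (continuous_plus (fun _ => 1) (fun s => c * PSeries A s)); [apply continuous_const|].
      apply (continuous_mult (fun _ => c) (PSeries A)); [apply continuous_const|].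
      apply continuity_pt_filterlim, PSeries_continuity, H0.
    + apply continuity_pt_filterlim, PSeries_continuity. rewrite CV_radius_derive. exact H0.
  - exists (mkposreal _ Hmin). intros s Hs Hs'. change (Rabs (s - 0) < Rmin h lam) in Hs.
    rewrite Rminus_0_r, Rabs_pos_eq in Hs by lra.
    pose proof (Rmin_l h lam). pose proof (Rmin_r h lam).
    unfold flux_of. destruct Rle_dec.
    + replace s with 0 by lra. rewrite <- Hy, <- Hd0A by lra. lra.
    + assert (Hdys : is_derive (PSeries A) s (dy s)).
      { apply (is_derive_ext_loc y); [|apply Hdy; lra].
        assert (He : 0 < Rmin s (Rmin h lam - s)) by (apply Rmin_pos; lra).
        exists (mkposreal _ He). intros z Hz. change (Rabs (z - s) < Rmin s (Rmin h lam - s)) in Hz.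
        pose proof (Rmin_l s (Rmin h lam - s)). pose proof (Rmin_r s (Rmin h lam - s)).
        apply Rabs_def2 in Hz. apply Hy. lra. }
      apply is_derive_unique in Hdys.
      rewrite (is_derive_unique _ _ _ (HdA s ltac:(rewrite Rabs_pos_eq; lra))) in Hdys.
      rewrite Hy, <- Hdys by lra. reflexivity.
Qed.

Lemma flux_system_of_bvp lam gamma c y : 0 < lam -> 0 <= c ->
  inK lam y -> solves_bvp lam gamma c y -> exists u, flux_system lam gamma c y u.
Proof.
  intros Hlam Hc [Han [_ Hrange]] [[dy [Hdy Hode]] [[d0 [Hd0 Hbc]] _]].
  assert (HD : forall x, 0 <= x <= lam -> 1 <= 1 + c * y x)
    by (intros x Hx; specialize (Hrange x Hx); nra).
  set (u := flux_of gamma c y dy).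
  assert (Hu_pos : forall x, 0 < x -> u x = (1 + c * y x) * dy x)
    by (intros x Hx; unfold u, flux_of; destruct Rle_dec; [lra|reflexivity]).
  assert (Hu : forall x, 0 < x < lam -> is_derive u x (- (2 * x) * (u x / (1 + c * y x)))).
  { intros x Hx. destruct (Hode x Hx) as [Hex Heq].
    apply (is_derive_ext_loc (fun t => (1 + c * y t) * dy t)).
    - exists (mkposreal x (proj1 Hx)). intros t Ht. change (Rabs (t - x) < x) in Ht.
      apply Rabs_def2 in Ht. symmetry. apply Hu_pos. lra.
    - eapply is_derive_eq; [apply Derive_correct, Hex|].
      rewrite Hu_pos by lra. specialize (HD x ltac:(lra)).
      transitivity (- (2 * x) * dy x); [|field; lra].
      apply (Rplus_eq_reg_r (2 * x * dy x)). etransitivity; [exact Heq|ring]. }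
  exists u. constructor.
  - exact Hc.
  - exact Hrange.
  - apply continuous_on_of_analytic; assumption.
  - apply continuous_on_of_locally_eq. intros x Hx. destruct (Req_dec x 0) as [->|Hx0].
    + exact (flux_of_near_0 lam gamma c y dy d0 Hlam Han Hdy Hd0 Hbc).
    + exists u. split; [|now apply filter_forall].
      apply (@ex_derive_continuous R_AbsRing R_NormedModule). eexists. apply Hu. lra.
  - unfold u, flux_of. destruct Rle_dec; [reflexivity|lra].
  - intros x Hx. rewrite Hu_pos by lra. specialize (HD x ltac:(lra)).
    eapply is_derive_eq; [apply Hdy, Hx|field; lra].
  - exact Hu.
Qed.


Theorem theorem3p9 (lam gamma beta1 : R) (phi : R -> R -> R)
  (Hlam : 0 < lam) (Hgamma : 0 < gamma)
  (Hbeta1pos : 0 < beta1)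
  (Hbeta1eq : sqrt PI / 2 * gamma * beta1 * sqrt (1 + beta1) * (3 + beta1) = 1)
  (Hphi : forall b', 0 <= b' < beta1 ->
            inK lam (phi b') /\ solves_bvp lam gamma b' (phi b') /\
            (forall h, inK lam h -> solves_bvp lam gamma b' h ->
               forall x, 0 <= x <= lam -> h x = phi b' x))
  (b : R) (Hb : 0 < b < beta1) :
  exists L, 0 < L /\
    forall b1 b2, 0 <= b1 <= b -> 0 <= b2 <= b ->
      forall eta, 0 <= eta <= lam ->
        Rabs (phi b1 eta - phi b2 eta) <= L * Rabs (b1 - b2).
Proof.
  set (L := lipschitz_const lam gamma b).
  exists L. split; [pose proof (lipschitz_const_ge1 lam gamma b Hlam Hgamma ltac:(lra)); unfold L; lra|].
  assert (Hsol : forall b', 0 <= b' <= b ->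
                   exists u, flux_system lam gamma b' (phi b') u /\ phi b' lam = 1).
  { intros b' Hb'. destruct (Hphi b' ltac:(lra)) as [HK [HS _]].
    destruct (flux_system_of_bvp lam gamma b' (phi b') Hlam ltac:(lra) HK HS) as [u G].
    exists u. split; [exact G|exact (proj2 (proj2 HS))]. }
  assert (Hlt : forall b1 b2, 0 <= b1 < b2 -> b2 <= b -> forall eta, 0 <= eta <= lam ->
                  Rabs (phi b1 eta - phi b2 eta) <= L * Rabs (b1 - b2)).
  { intros b1 b2 H12 H2 eta Heta.
    destruct (Hsol b1 ltac:(lra)) as [u1 [G1 E1]]. destruct (Hsol b2 ltac:(lra)) as [u2 [G2 E2]].
    rewrite (Rabs_minus_sym b1 b2), (Rabs_pos_eq (b2 - b1)) by lra.
    exact (solution_dist_le lam gamma b b1 b2 _ u1 _ u2 Hlam Hgamma ltac:(lra) ltac:(lra) H2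
             G1 G2 E1 E2 eta Heta). }
  intros b1 b2 H1 H2 eta Heta.
  destruct (Rtotal_order b1 b2) as [H|[<-|H]].
  - apply Hlt; lra.
  - rewrite !Rminus_diag, Rabs_R0. lra.
  - rewrite Rabs_minus_sym, (Rabs_minus_sym b1). apply Hlt; lra.
Qed.
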